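(* Let $k\geqslant 1$ and let $\pi_1, \ldots, \pi_k \geqslant 3$ be pairwise relatively prime integers, with $\pi_1=3$. Then the NFA $A_{\pi_1, \ldots, \pi_k}$ and the regular expression $\alpha_{\pi_1, \ldots, \pi_k}$ define the same language.
   Context: Over the alphabet $\{a,b\}$, for an integer $\pi\geqslant 3$ let $\beta_\pi=(a((b\mid\epsilon)a)^{\pi-2}a)^*$, where $(b\mid\epsilon)$ denotes the language $\{b,\epsilon\}$ and $x^{m}$ denotes $m$-fold concatenation; and let $\alpha_{\pi_1,\ldots,\pi_k}=\big(a(\beta_{\pi_1}\mid\cdots\mid\beta_{\pi_k})b\big)^*$. The NFA $A_{\pi_1,\ldots,\pi_k}=(\{a,b\},Q,\{\widehat q\},\delta,\{\widehat q\})$ has states $Q=\{\widehat{q}\} \cup \bigcup_{i=1}^k \{q_{i,0}, \ldots, q_{i,\pi_i-1}\} \cup \bigcup_{i=1}^k \{r_{i,1}, \ldots, r_{i,\pi_i-2}\}$, unique initial state $\widehat q$, unique accepting state $\widehat q$, and exactly the following transitions: $\delta(\widehat{q}, a) = \{q_{1,0}, \ldots, q_{k,0}\}$; $\delta(q_{i,j},a) = \{q_{i,(j+1) \bmod \pi_i}\}$ for all $i$ and $0\leqslant j\leqslant \pi_i-1$; $\delta(q_{i,j},b) = \{r_{i,j}\}$ and $\delta(r_{i,j},a)=\{q_{i,j+1}\}$ for $1 \leqslant j \leqslant \pi_i-2$; $\delta(q_{i,0},b) = \{\widehat{q}\}$; all other transitions are empty. *)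

From mathcomp Require Import all_boot.
Set Implicit Arguments. Unset Strict Implicit. Unset Printing Implicit Defensive.

Inductive letter := la | lb.
Definition word := seq letter.

Inductive regex :=
  | REps
  | RSym of letter
  | RAlt of regex & regex
  | RCat of regex & regex
  | RStar of regex.

Inductive lang : regex -> word -> Prop :=
  | L_eps : lang REps [::]
  | L_sym c : lang (RSym c) [:: c]
  | L_altl r s w : lang r w -> lang (RAlt r s) w
  | L_altr r s w : lang s w -> lang (RAlt r s) w
  | L_cat r s u v : lang r u -> lang s v -> lang (RCat r s) (u ++ v)
  | L_star0 r : lang (RStar r) [::]
  | L_starS r u v : lang r u -> lang (RStar r) v -> lang (RStar r) (u ++ v).

Fixpoint rpow (r : regex) (m : nat) : regex :=
  if m is m'.+1 then RCat r (rpow r m') else REps.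

Fixpoint ralts (r : regex) (rs : seq regex) : regex :=
  if rs is r' :: rs' then RAlt r (ralts r' rs') else r.

Definition beta (p : nat) : regex :=
  RStar (RCat (RSym la)
     (RCat (rpow (RCat (RAlt (RSym lb) REps) (RSym la)) (p - 2)) (RSym la))).

(* alpha_{pi_1..pi_k} = ( a (beta_pi1 | ... | beta_pik) b )^*,
   for the list pis = [:: pi_1; ...; pi_k] (k >= 1) *)
Definition alpha (pis : seq nat) : regex :=
  RStar (RCat (RSym la)
     (RCat (ralts (beta (head 0 pis)) (map beta (behead pis))) (RSym lb))).

Record nfa := NFA {
  nstate : Type;
  ndelta : nstate -> letter -> nstate -> Prop;   (* q' \in delta(q, c) *)
  ninit : nstate -> Prop;
  nfinal : nstate -> Prop }.

Inductive run (S : Type) (d : S -> letter -> S -> Prop) : S -> word -> S -> Prop :=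
  | run_nil p : run d p [::] p
  | run_cons p c q w r : d p c q -> run d q w r -> run d p (c :: w) r.

Definition nfa_lang (A : nfa) (w : word) : Prop :=
  exists p q, @ninit A p /\ @nfinal A q /\ run (@ndelta A) p w q.

(* States of A_{pi_1..pi_k}; the paper's q_{i,j}, r_{i,j} with i in 1..k are
   encoded as AQ (i-1) j and AR (i-1) j (0-based component index). *)
Inductive astate := AHat | AQ of nat & nat | AR of nat & nat.

Definition pi_ (pis : seq nat) (i : nat) : nat := nth 0 pis i.

Inductive adelta (pis : seq nat) : astate -> letter -> astate -> Prop :=
  | ad_hat i : i < size pis -> adelta pis AHat la (AQ i 0)
  | ad_cyc i j : i < size pis -> j < pi_ pis i ->
      adelta pis (AQ i j) la (AQ i (j.+1 %% pi_ pis i))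
  | ad_qr i j : i < size pis -> 1 <= j <= pi_ pis i - 2 ->
      adelta pis (AQ i j) lb (AR i j)
  | ad_rq i j : i < size pis -> 1 <= j <= pi_ pis i - 2 ->
      adelta pis (AR i j) la (AQ i j.+1)
  | ad_back i : i < size pis -> adelta pis (AQ i 0) lb AHat.

Definition A_nfa (pis : seq nat) : nfa :=
  @NFA astate (adelta pis) (fun p => p = AHat) (fun p => p = AHat).

From mathcomp Require Import all_boot zify.

Set Implicit Arguments.
Unset Strict Implicit.
Unset Printing Implicit Defensive.

(* Words of [alpha] lead from the initial state back to itself: each factor
   (b|eps) a of beta_p moves q_{i,j} to q_{i,j+1}, directly or through
   r_{i,j}, and the two outer letters a of a beta_p block close the cycle
   q_{i,0} -> q_{i,1}, q_{i,p-1} -> q_{i,0}.  Conversely, by backward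
   induction along an accepting run, every state s gets a language containing
   all words leading from s to the final state; from q_{i,j} with j > 0 these
   are the words z a y b v with z in ((b|eps) a)^(p-1-j), y in beta_p and
   v in alpha.  Each component only needs p >= 2: neither coprimality nor
   pi_1 = 3 plays a role. *)

Lemma lang_eps_inv w : lang REps w -> w = [::].
Proof. by move=> H; inversion H. Qed.

Lemma lang_sym_inv c w : lang (RSym c) w -> w = [:: c].
Proof. by move=> H; inversion H. Qed.

Lemma lang_alt_inv r s w : lang (RAlt r s) w -> lang r w \/ lang s w.
Proof. by move=> H; inversion H; [left | right]. Qed.

Lemma lang_cat_inv r s w :
  lang (RCat r s) w -> exists u v, [/\ w = u ++ v, lang r u & lang s v].
Proof. by move=> H; inversion H; exists u, v. Qed.

Lemma lang_sym_cat_sym c r d u :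
  lang r u -> lang (RCat (RSym c) (RCat r (RSym d))) (c :: u ++ [:: d]).
Proof. by move=> Hu; apply: (@L_cat _ _ [:: c]) (L_cat Hu (L_sym d)); apply: L_sym. Qed.

Lemma lang_sym_cat_sym_inv c r d w : lang (RCat (RSym c) (RCat r (RSym d))) w ->
  exists2 u, w = c :: u ++ [:: d] & lang r u.
Proof.
move=> /lang_cat_inv[? [? [-> /lang_sym_inv -> /lang_cat_inv[u [? [-> Hu]]]]]].
by move=> /lang_sym_inv ->; exists u.
Qed.

Lemma lang_ralts r rs w :
  lang (ralts r rs) w <-> exists2 i, i <= size rs & lang (nth REps (r :: rs) i) w.
Proof.
elim: rs r => [|r' rs IH] r /=.
  by split=> [|[[|i]]] //; exists 0.
split=> [/lang_alt_inv[|/IH[i]]|[[|i] /= i_le]]; first by exists 0.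
- by exists i.+1.
- exact: L_altl.
- by move=> ?; apply/L_altr/IH; exists i.
Qed.

Lemma lang_ralts_beta pis w : 0 < size pis ->
  lang (ralts (beta (head 0 pis)) (map beta (behead pis))) w <->
  exists2 i, i < size pis & lang (beta (pi_ pis i)) w.
Proof.
case: pis => [|p ps] //= _; rewrite lang_ralts size_map.
have nth_beta i : i < (size ps).+1 ->
    nth REps (beta p :: map beta ps) i = beta (pi_ (p :: ps) i).
  by move=> i_lt; rewrite -(nth_map 0 REps beta (s := p :: ps) i_lt).
by split=> -[i i_lt]; exists i; rewrite // ?nth_beta // -?nth_beta.
Qed.

Definition opt_b_a := RCat (RAlt (RSym lb) REps) (RSym la).

Lemma lang_opt_b_a_pow_a m z :
  lang (rpow opt_b_a m) z -> lang (rpow opt_b_a m.+1) (la :: z).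
Proof.
by move=> Hz; apply: (@L_cat _ _ [:: la]) => //;
  apply: (@L_cat _ _ [::] [:: la]); [apply/L_altr/L_eps | apply: L_sym].
Qed.

Lemma lang_opt_b_a_pow_ba m z :
  lang (rpow opt_b_a m) z -> lang (rpow opt_b_a m.+1) (lb :: la :: z).
Proof.
by move=> Hz; apply: (@L_cat _ _ [:: lb; la]) => //;
  apply: (@L_cat _ _ [:: lb] [:: la]); [apply/L_altl/L_sym | apply: L_sym].
Qed.

Lemma lang_beta_cons p z y : lang (rpow opt_b_a (p - 2)) z ->
  lang (beta p) y -> lang (beta p) (la :: z ++ la :: y).
Proof.
move=> Hz Hy; have -> : la :: z ++ la :: y = (la :: z ++ [:: la]) ++ y.
  by rewrite /= -catA.
exact: L_starS (lang_sym_cat_sym _ _ Hz) Hy.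
Qed.

Lemma lang_alpha_cons pis i u v : i < size pis ->
  lang (beta (pi_ pis i)) u -> lang (alpha pis) v ->
  lang (alpha pis) (la :: u ++ lb :: v).
Proof.
move=> i_lt Hu Hv; have -> : la :: u ++ lb :: v = (la :: u ++ [:: lb]) ++ v.
  by rewrite /= -catA.
apply: L_starS Hv; apply: lang_sym_cat_sym.
by apply/lang_ralts_beta; [lia | exists i].
Qed.

Lemma run_cat S (d : S -> letter -> S -> Prop) p u q v r :
  run d p u q -> run d q v r -> run d p (u ++ v) r.
Proof. by elim=> // p0 c q0 w r0 step _ IH /IH; apply: run_cons step. Qed.

Lemma run_star S (d : S -> letter -> S -> Prop) s r w :
  (forall u, lang r u -> run d s u s) -> lang (RStar r) w -> run d s w s.
Proof.
move=> loop H; move Er: (RStar r) => r' in H.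
elim: H Er => // [_ _|r0 u v Hu _ _ IH [Er]]; first exact: run_nil.
by subst; apply: run_cat (loop _ Hu) (IH erefl).
Qed.

Section Soundness.

Variable pis : seq nat.
Hypothesis pi_gt1 : forall i, i < size pis -> 1 < pi_ pis i.

Lemma adelta_a_next i j : i < size pis -> j.+1 < pi_ pis i ->
  adelta pis (AQ i j) la (AQ i j.+1).
Proof.
by move=> i_lt j_lt; rewrite -[j.+1](modn_small j_lt); apply: ad_cyc => //; lia.
Qed.

Lemma adelta_a_wrap i : i < size pis ->
  adelta pis (AQ i (pi_ pis i).-1) la (AQ i 0).
Proof.
move=> i_lt; have p_gt0 : 0 < pi_ pis i by have := pi_gt1 i_lt; lia.
by have := @ad_cyc pis i (pi_ pis i).-1 i_lt; rewrite prednK // modnn; apply.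
Qed.

Lemma run_opt_b_a i j v : i < size pis -> 0 < j -> j.+1 < pi_ pis i ->
  lang opt_b_a v -> run (adelta pis) (AQ i j) v (AQ i j.+1).
Proof.
move=> i_lt j_gt0 j_lt /lang_cat_inv[? [? [-> /lang_alt_inv[] Hb /lang_sym_inv ->]]].
  rewrite (lang_sym_inv Hb); apply: (run_cons (ad_qr _ _)) => //; first lia.
  by apply: (run_cons (ad_rq _ _)) => //; [lia | apply: run_nil].
by rewrite (lang_eps_inv Hb); apply: run_cons (adelta_a_next i_lt j_lt) (run_nil _ _).
Qed.

Lemma run_opt_b_a_pow i m j v : i < size pis -> 0 < j -> j + m < pi_ pis i ->
  lang (rpow opt_b_a m) v -> run (adelta pis) (AQ i j) v (AQ i (j + m)).
Proof.
move=> i_lt; elim: m j v => [|m IH] j v j_gt0 jm_lt /=.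
  by move=> /lang_eps_inv ->; rewrite addn0; apply: run_nil.
move=> /lang_cat_inv[v1 [v2 [-> H1 H2]]]; rewrite addnS -addSn.
by apply: run_cat (run_opt_b_a _ _ _ H1) (IH _ _ _ _ H2) => //; lia.
Qed.

Lemma run_beta i w : i < size pis ->
  lang (beta (pi_ pis i)) w -> run (adelta pis) (AQ i 0) w (AQ i 0).
Proof.
move=> i_lt; have p_gt1 := pi_gt1 i_lt; apply: run_star => ?.
move=> /lang_sym_cat_sym_inv[z -> Hz].
apply: run_cons (adelta_a_next i_lt p_gt1) _.
have [end_lt end_eq] :
  1 + (pi_ pis i - 2) < pi_ pis i /\ 1 + (pi_ pis i - 2) = (pi_ pis i).-1.
  by split; lia.
have := run_opt_b_a_pow i_lt (ltn0Sn 0) end_lt Hz; rewrite end_eq => run_z.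
by apply: run_cat run_z (run_cons (adelta_a_wrap i_lt) (run_nil _ _)).
Qed.

Lemma run_alpha w : 0 < size pis ->
  lang (alpha pis) w -> run (adelta pis) AHat w AHat.
Proof.
move=> size_gt0; apply: run_star => ?.
move=> /lang_sym_cat_sym_inv[v -> Hv].
have [i i_lt Hb] := (lang_ralts_beta v size_gt0).1 Hv.
apply: run_cons (ad_hat i_lt) _; apply: run_cat (run_beta i_lt Hb) _.
by apply: run_cons (ad_back i_lt) (run_nil _ _).
Qed.

End Soundness.

Definition lang_to_q0 p j u :=
  if j is 0 then lang (beta p) u
  else exists z y, [/\ u = z ++ la :: y, lang (rpow opt_b_a (p.-1 - j)) z
                     & lang (beta p) y].

Lemma lang_to_q0_a p j u : 1 < p -> j < p ->
  lang_to_q0 p (j.+1 %% p) u -> lang_to_q0 p j (la :: u).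
Proof.
move=> p_gt1 j_lt; case: (ltngtP j.+1 p) => [j1_lt||j1_eq]; last 2 first.
- lia.
- rewrite j1_eq modnn /= => Hu; case: j j_lt j1_eq => [|j] //= _ j1_eq; first lia.
  by exists [::], u; split; rewrite // (_ : _ - _ = 0); [apply: L_eps | lia].
rewrite modn_small //; case: j j_lt j1_lt => [|j] _ j1_lt [z [y [-> Hz Hy]]].
  by apply: lang_beta_cons; rewrite // (_ : p - 2 = p.-1 - 1); last lia.
exists (la :: z), y; split => //.
by rewrite (_ : p.-1 - j.+1 = (p.-1 - j.+2).+1); [apply: lang_opt_b_a_pow_a | lia].
Qed.

Lemma lang_to_q0_ba p j u : 0 < j -> j.+1 < p ->
  lang_to_q0 p j.+1 u -> lang_to_q0 p j (lb :: la :: u).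
Proof.
case: j => [|j] // _ j_lt [z [y [-> Hz Hy]]].
exists (lb :: la :: z), y; split => //.
by rewrite (_ : p.-1 - j.+1 = (p.-1 - j.+2).+1); [apply: lang_opt_b_a_pow_ba | lia].
Qed.

Section Completeness.

Variable pis : seq nat.
Hypothesis pi_gt1 : forall i, i < size pis -> 1 < pi_ pis i.

Definition lang_to_hat s w :=
  match s with
  | AHat => lang (alpha pis) w
  | AQ i j => exists u v,
      [/\ w = u ++ lb :: v, lang_to_q0 (pi_ pis i) j u & lang (alpha pis) v]
  | AR i j => exists u v,
      [/\ w = la :: u ++ lb :: v, lang_to_q0 (pi_ pis i) j.+1 u & lang (alpha pis) v]
  end.

Lemma lang_to_hat_step s c s' w :
  adelta pis s c s' -> lang_to_hat s' w -> lang_to_hat s (c :: w).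
Proof.
case=> {s c s'} [i i_lt | i j i_lt j_lt | i j i_lt j_bounds | i j _ _ | i _] /=.
- by case=> u [v [-> Hu Hv]]; apply: lang_alpha_cons i_lt Hu Hv.
- case=> u [v [-> Hu Hv]]; exists (la :: u), v; split => //.
  exact: lang_to_q0_a (pi_gt1 i_lt) j_lt Hu.
- case=> u [v [-> Hu Hv]]; exists (lb :: la :: u), v; split => //.
  by apply: lang_to_q0_ba Hu; lia.
- by case=> u [v [-> Hu Hv]]; exists u, v.
- by move=> Hw; exists [::], w; split => //; apply: L_star0.
Qed.

Lemma run_lang_to_hat s w :
  run (adelta pis) s w AHat -> lang_to_hat s w.
Proof.
move Ehat: AHat => hat run_w; elim: run_w Ehat => [_ <-|p c q w' r step _ IH Ehat].
  exact: L_star0.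
exact: lang_to_hat_step step (IH Ehat).
Qed.

End Completeness.

Theorem lemma5 (pis : seq nat) :
  0 < size pis ->
  (forall i, i < size pis -> 3 <= nth 0 pis i) ->
  (forall i j, i < size pis -> j < size pis -> i != j ->
     coprime (nth 0 pis i) (nth 0 pis j)) ->
  nth 0 pis 0 = 3 ->
  forall w : word, nfa_lang (A_nfa pis) w <-> lang (alpha pis) w.
Proof.
move=> size_gt0 pi_ge3 _ _ w.
have pi_gt1 i : i < size pis -> 1 < pi_ pis i by move/pi_ge3; apply: leq_trans.
split=> [[_ [_ [/= -> [-> run_w]]]] | Hw].
  exact: run_lang_to_hat run_w.
by exists AHat, AHat; do 2!split=> //; exact: (run_alpha pi_gt1 size_gt0 Hw).
Qed.
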